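(* For every integer $n>16$, the generalized Petersen graph $GP(n,3)$ is not $1$-distance-balanced.
   Context: For a connected graph $G$ and $x,y\in V(G)$, $d_G(x,y)$ denotes the distance. Let $W_{xy}=\{w\in V(G): d_G(w,x)<d_G(w,y)\}$. $G$ is called $\ell$-distance-balanced if $|W_{xy}|=|W_{yx}|$ for every pair $x,y\in V(G)$ with $d_G(x,y)=\ell$. For integers $n\ge 3$ and $1\le k<n/2$, the generalized Petersen graph $GP(n,k)$ has vertex set $\{u_i: i\in\mathbb{Z}_n\}\cup\{v_i: i\in\mathbb{Z}_n\}$ and edge set $\{u_iu_{i+1}: i\in\mathbb{Z}_n\}\cup\{v_iv_{i+k}: i\in\mathbb{Z}_n\}\cup\{u_iv_i: i\in\mathbb{Z}_n\}$. *)

From mathcomp Require Import all_boot.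
Set Implicit Arguments. Unset Strict Implicit. Unset Printing Implicit Defensive.

Section Graphs.
Variables (T : finType) (e : rel T).

Definition walk_len (m : nat) (x y : T) : bool :=
  [exists s : m.-tuple T, path e x s && (last x s == y)].

(* graph distance: least m with a walk of length m from x to y.
   (A shortest walk never has more than #|T| - 1 edges; for a disconnected
   pair the value defaults to #|T|, irrelevant for connected graphs.) *)
Definition gdist (x y : T) : nat := find (fun m => walk_len m x y) (iota 0 #|T|).

Definition Wset (x y : T) : {set T} := [set w | gdist w x < gdist w y].

Definition dist_balanced (l : nat) : Prop :=
  forall x y : T, gdist x y = l -> #|Wset x y| = #|Wset y x|.
End Graphs.

(* Generalized Petersen graph GP(n,k): vertices (false, i) = u_i, (true, i) = v_i,
   i in Z_n represented by 'I_n. Edges u_i u_{i+1}, v_i v_{i+k}, u_i v_i. *)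
Definition GP_adj (n k : nat) : rel (bool * 'I_n) :=
  fun x y =>
    let: (b, i) := x in let: (c, j) := y in
    if b == c then
      let s := if b then k else 1 in
      (val j == (val i + s) %% n) || (val i == (val j + s) %% n)
    else val i == val j.

Arguments GP_adj n k : clear implicits.

From mathcomp Require Import all_boot.
From mathcomp Require Import zify.

(* Since u_0 and v_0 are adjacent, it suffices that more than half of the 2n
   vertices are strictly closer to v_0 than to u_0.  The position reached by a
   walk only depends on its numbers of outer and inner steps in each direction,
   so a walk from an outer vertex can be rearranged as outer steps, one spoke,
   inner steps.  Hence a walk from u_j to u_0 that uses spokes (at least two of
   them) becomes a shorter walk to v_0 with a single spoke, and a spoke-free
   one, when 3 <= j <= n - 3, contains three outer steps in one direction,
   which can be traded for the spoke and one inner step.  The inner vertices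
   v_0, v_3, v_6, v_9, v_(n-3), v_(n-6) reach v_0 by t <= 3 inner steps, whereas
   a walk to u_0 needs a spoke and, as n > 16, at least t further steps.  These
   n + 1 vertices break the balance. *)

Set Implicit Arguments.
Unset Strict Implicit.
Unset Printing Implicit Defensive.

Lemma eq_mod_cases d x y : x = y %[mod d] -> [\/ x = y, x + d <= y | y + d <= x].
Proof.
have le_case u v : u <= v -> v = u %[mod d] -> u = v \/ u + d <= v.
  move=> le_uv /eqP; rewrite eqn_mod_dvd //.
  have [vu0|vu_gt0] := posnP (v - u); first by left; lia.
  by move=> /(dvdn_leq vu_gt0) ?; right; lia.
move=> Exy; case: (leqP x y) => [le_xy | /ltnW le_yx].
  by case: (le_case _ _ le_xy (esym Exy)) => ?; [apply: Or31 | apply: Or32].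
by case: (le_case _ _ le_yx Exy) => ?; [apply: Or31 | apply: Or33].
Qed.

Section GraphWalks.
Variables (T : finType) (e : rel T).

Definition walk (m : nat) (x y : T) : Prop :=
  exists2 s : seq T, size s = m & path e x s && (last x s == y).

Lemma walk_lenP m x y : reflect (walk m x y) (walk_len e m x y).
Proof.
rewrite /walk; apply: (iffP existsP) => [[s Hs] | [s Hs Hp]].
  by exists (val s); rewrite ?size_tuple.
by exists (Tuple (introT eqP Hs)).
Qed.

Lemma walk0 x : walk 0 x x. Proof. by exists [::]; rewrite //= eqxx. Qed.

Lemma walk_cat a b x y z : walk a x y -> walk b y z -> walk (a + b) x z.
Proof.
case=> s1 <- /andP[P1 /eqP L1] [s2 <- P2]; exists (s1 ++ s2).
  exact: size_cat.
by rewrite cat_path last_cat P1 L1.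
Qed.

Lemma walk_rcons m x y z : walk m x y -> e y z -> walk m.+1 x z.
Proof.
move=> W E; rewrite -addn1; apply: walk_cat W _.
by exists [:: z]; rewrite //= E eqxx.
Qed.

Lemma walk_edge x y : e x y -> walk 1 x y.
Proof. exact: walk_rcons (walk0 x). Qed.

Lemma gdist_le m x y : walk m x y -> gdist e x y <= m.
Proof.
move=> W; have [lt_m|le_m] := ltnP m #|T|; last first.
  by apply: leq_trans le_m; rewrite -[#|T|](size_iota 0) find_size.
rewrite leqNgt; apply/negP => /(before_find 0).
by rewrite nth_iota // add0n (introT (walk_lenP _ _ _) W).
Qed.

Lemma gdist_walk x y : gdist e x y < #|T| -> walk (gdist e x y) x y.
Proof.
move=> lt_d; apply/walk_lenP.
have has_walk : has (fun m => walk_len e m x y) (iota 0 #|T|).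
  by rewrite has_find size_iota.
by have := nth_find 0 has_walk; rewrite nth_iota // add0n.
Qed.

Lemma gdist_edge x y : e x y -> x != y -> gdist e x y = 1.
Proof.
move=> E neq_xy; apply/anti_leq; rewrite (gdist_le (walk_edge E)) lt0n /=.
apply: contra neq_xy => /eqP d0.
have /gdist_walk : gdist e x y < #|T| by rewrite d0; apply/card_gt0P; exists x.
by rewrite d0 => -[[|//] _ /andP[_]].
Qed.

Lemma gdist_lt_shortcut w x y m : m < #|T| -> walk m w y ->
  (forall L, walk L w x -> exists2 m', m' < L & walk m' w y) ->
  gdist e w y < gdist e w x.
Proof.
move=> lt_m Wy short; have [lt_d|le_d] := ltnP (gdist e w x) #|T|.
  have [m' lt_m' /gdist_le] := short _ (gdist_walk lt_d).
  by move/leq_ltn_trans; apply.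
by apply: leq_ltn_trans (gdist_le Wy) (leq_trans lt_m le_d).
Qed.

Lemma not_dist_balanced_of_large_Wset l x y :
  gdist e x y = l -> #|T| < 2 * #|Wset e y x| -> ~ dist_balanced e l.
Proof.
move=> dxy big bal; move: big; rewrite mul2n -addnn -{1}(bal x y dxy) -cardsUI.
have -> : Wset e x y :&: Wset e y x = set0.
  by apply/setP => w; rewrite !inE; apply/negbTE/andP => -[]; lia.
by rewrite cards0 addn0 ltnNge max_card.
Qed.

End GraphWalks.

Section GeneralizedPetersen.
Variable n : nat.
Hypothesis n_gt0 : 0 < n.

Definition pos (p : nat) : 'I_n := Ordinal (ltn_pmod p n_gt0).

Lemma pos_mod_eq p q : p = q %[mod n] -> pos p = pos q.
Proof. by move=> Epq; apply: val_inj. Qed.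

Lemma pos_addl p q : pos (pos p + q) = pos (p + q).
Proof. exact/pos_mod_eq/modnDml. Qed.

Lemma pos_val (i : 'I_n) : pos i = i.
Proof. by apply: val_inj; rewrite /= modn_small. Qed.

Definition u0 : bool * 'I_n := (false, pos 0).
Definition v0 : bool * 'I_n := (true, pos 0).

Lemma card_GP : #|{: bool * 'I_n}| = n + n.
Proof. by rewrite card_prod card_bool card_ord mul2n addnn. Qed.

Section RimAndSpokeWalks.
Variable k : nat.
Hypothesis k_le_n : k <= n.

Local Notation e := (GP_adj n k).
Local Notation walk := (walk e).

Definition rim_step (b : bool) : nat := if b then k else 1.

Lemma rim_step_le b : rim_step b <= n.
Proof. by case: b. Qed.

Lemma GP_rim_succ b (i : 'I_n) : e (b, i) (b, pos (i + rim_step b)).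
Proof. by rewrite /GP_adj eqxx /= eqxx. Qed.

Lemma GP_rim_pred b (i : 'I_n) : e (b, i) (b, pos (i + (n - rim_step b))).
Proof.
rewrite /GP_adj eqxx /= -/(rim_step b); apply/orP; right.
by rewrite modnDml -addnA subnK ?rim_step_le // modnDr modn_small.
Qed.

Lemma GP_spoke (i : 'I_n) : e (false, i) (true, i).
Proof. by rewrite /GP_adj /=. Qed.

Lemma GP_adjP x y : e x y ->
  [\/ y = (x.1, pos (x.2 + rim_step x.1)),
      y = (x.1, pos (x.2 + (n - rim_step x.1))) | y = (~~ x.1, x.2)].
Proof.
case: x y => [b i] [c j]; rewrite /GP_adj /=; case: eqP => [<- | /eqP neq_bc].
  rewrite -/(rim_step b) => /orP[] /eqP Eij; [apply: Or31 | apply: Or32];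
    congr pair; apply: val_inj => //=.
  by rewrite Eij modnDml -addnA subnKC ?rim_step_le // modnDr modn_small.
by move=> /eqP Eij; apply: Or33; congr pair; [case: b c neq_bc => -[] | exact: val_inj].
Qed.

Lemma rim_walk_iter b t (i : 'I_n) m :
  (forall j : 'I_n, e (b, j) (b, pos (j + t))) -> walk m (b, i) (b, pos (i + t * m)).
Proof.
move=> step; elim: m => [|m IH]; first by rewrite muln0 addn0 pos_val; apply: walk0.
by rewrite mulnSr addnA -pos_addl; apply: walk_rcons IH (step _).
Qed.

Lemma rim_walk b (i : 'I_n) f g :
  walk (f + g) (b, i) (b, pos (i + (rim_step b * f + (n - rim_step b) * g))).
Proof.
rewrite addnA -pos_addl.
exact: walk_cat (rim_walk_iter i f (GP_rim_succ b)) (rim_walk_iter _ g (GP_rim_pred b)).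
Qed.

(* Index reached after [a] steps u_i u_(i+1), [b] steps u_i u_(i-1), [c] steps
   v_i v_(i+k) and [d] steps v_i v_(i-k), backward steps being written as
   forward steps by [n - 1] and [n - k]. *)
Definition shift a b c d := a + (n - 1) * b + k * c + (n - k) * d.

Lemma spoke_walk (i : 'I_n) a b c d :
  walk (a + b + 1 + c + d) (false, i) (true, pos (i + shift a b c d)).
Proof.
rewrite (_ : a + b + 1 + c + d = (a + b).+1 + (c + d)); last by lia.
rewrite (_ : i + shift a b c d = i + (1 * a + (n - 1) * b) + (k * c + (n - k) * d));
  last by rewrite /shift; lia.
rewrite -pos_addl.
exact: walk_cat (walk_rcons (rim_walk false i a b) (GP_spoke _)) (rim_walk true _ c d).
Qed.

Lemma spoke_walk_v0 (i : 'I_n) a b c d :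
  pos (i + shift a b c d) = pos 0 -> walk (a + b + 1 + c + d) (false, i) v0.
Proof. by move=> E; have := spoke_walk i a b c d; rewrite E. Qed.

Lemma inner_walk_v0 (i : 'I_n) c d :
  pos (i + shift 0 0 c d) = pos 0 -> walk (c + d) (true, i) v0.
Proof.
by rewrite /shift muln0 !add0n => E; have := rim_walk true i c d; rewrite /= E.
Qed.

Lemma walk_step_counts L x y : walk L x y -> exists a b c d S,
  [/\ L = a + b + c + d + S, pos (x.2 + shift a b c d) = y.2,
      odd S = (x.1 != y.1) & ~~ x.1 -> S = 0 -> c + d = 0].
Proof.
case=> s <- /andP[]; elim: s x => [|z s IH] x /=.
  move=> _ /eqP <-; exists 0, 0, 0, 0, 0; split => //; last by rewrite eqxx.
  by rewrite /shift !muln0 !addn0 pos_val.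
move=> /andP[/GP_adjP E_xz P_zs] /(IH _ P_zs) [a [b [c [d [S [-> Ey HS Hrim]]]]]].
case: x E_xz {IH P_zs} => r i /= [] E_z; subst z; rewrite /= ?pos_addl in Ey HS Hrim *.
- case: r Ey HS Hrim => Ey HS Hrim;
    [exists a, b, c.+1, d, S | exists a.+1, b, c, d, S]; split=> //; try lia;
    by rewrite -Ey; congr pos; rewrite /shift /rim_step; lia.
- case: r Ey HS Hrim => Ey HS Hrim;
    [exists a, b, c, d.+1, S | exists a, b.+1, c, d, S]; split=> //; try lia;
    by rewrite -Ey; congr pos; rewrite /shift /rim_step; lia.
by exists a, b, c, d, S.+1; split=> //; lia.
Qed.

Lemma shift_eq_mod p a b c d :
  pos (p + shift a b c d) = pos 0 -> p + a + k * c = b + k * d %[mod n].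
Proof.
move=> /(congr1 val) /= Ep.
rewrite -(modnMDl (b + d) (p + a + k * c)).
rewrite (_ : (b + d) * n + _ = p + shift a b c d + (b + k * d));
  last by rewrite /shift; nia.
by rewrite -modnDml Ep mod0n add0n.
Qed.

End RimAndSpokeWalks.
End GeneralizedPetersen.

Section GPn3.
Variable n : nat.
Hypothesis n_gt16 : 16 < n.

Let n_gt0 : 0 < n := leq_trans (isT : 0 < 17) n_gt16.
Let three_le_n : 3 <= n := leq_trans (isT : 3 <= 16) (ltnW n_gt16).

Local Notation pos := (pos n_gt0).
Local Notation u0 := (u0 n_gt0).
Local Notation v0 := (v0 n_gt0).
Local Notation e := (GP_adj n 3).
Local Notation shift := (shift n 3).

Lemma outer_closer_to_v0 j : 3 <= j <= n - 3 ->
  gdist e (false, pos j) v0 < gdist e (false, pos j) u0.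
Proof.
move=> j_mid.
have Wj : walk e (0 + j + 1 + 0 + 0) (false, pos j) v0.
  apply: (spoke_walk_v0 three_le_n); rewrite pos_addl; apply: pos_mod_eq.
  by rewrite (_ : j + shift 0 j 0 0 = j * n) ?modnMl ?mod0n // /shift; nia.
apply: (gdist_lt_shortcut _ Wj); first by rewrite card_GP; lia.
move=> L /(walk_step_counts n_gt0 three_le_n) [a [b [c [d [S [-> /= Ey HS Hrim]]]]]].
rewrite pos_addl in Ey.
have [S0|S_gt0] := posnP S.
  have [c0 d0] : c = 0 /\ d = 0 by have := Hrim isT S0; lia.
  have Hmod := shift_eq_mod three_le_n Ey; rewrite c0 d0 in Hmod Ey.
  have [a_ge3|b_ge3] : 3 <= a \/ 3 <= b by case: (eq_mod_cases Hmod); lia.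
    exists (a - 3 + b + 1 + 1 + 0); first by lia.
    apply: (spoke_walk_v0 three_le_n); rewrite pos_addl -Ey.
    by congr pos; rewrite /shift; lia.
  exists (a + (b - 3) + 1 + 0 + 1); first by lia.
  apply: (spoke_walk_v0 three_le_n); rewrite pos_addl -Ey; apply: pos_mod_eq.
  by rewrite -(modnMDl 2 (j + shift a (b - 3) 0 1)); congr (_ %% _); rewrite /shift; nia.
have S_ge2 : 1 < S by move: S_gt0 HS; case: S {Hrim} => [|[]].
exists (a + b + 1 + c + d); first by lia.
by apply: (spoke_walk_v0 three_le_n); rewrite pos_addl.
Qed.

Lemma inner_closer_to_v0 i t : t <= 3 -> i = 3 * t \/ i + 3 * t = n ->
  gdist e (true, pos i) v0 < gdist e (true, pos i) u0.
Proof.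
move=> t_le3 Hi.
have Wt : walk e t (true, pos i) v0.
  case: Hi => Hi; [rewrite -[t]add0n | rewrite -[t]addn0];
    apply: (inner_walk_v0 three_le_n); rewrite pos_addl; apply: pos_mod_eq.
    by rewrite (_ : i + shift 0 0 0 t = t * n) ?modnMl ?mod0n // /shift; nia.
  by rewrite (_ : i + shift 0 0 t 0 = n) ?modnn ?mod0n // /shift; nia.
apply: (gdist_lt_shortcut _ Wt); first by rewrite card_GP; lia.
move=> L /(walk_step_counts n_gt0 three_le_n) [a [b [c [d [S [-> /= Ey HS _]]]]]].
rewrite pos_addl in Ey.
exists t => //; case: (eq_mod_cases (shift_eq_mod three_le_n Ey)); lia.
Qed.

Definition inner_indices : seq nat :=
  [seq 3 * t | t <- iota 0 4] ++ [seq n - 3 * t | t <- iota 1 2].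

Definition witnesses : seq (bool * 'I_n) :=
  [seq (false, pos j) | j <- iota 3 (n - 5)] ++ [seq (true, pos i) | i <- inner_indices].

Lemma witnesses_uniq : uniq witnesses.
Proof.
have pos_inj_in b (s : seq nat) :
    all (fun j => j < n) s -> {in s &, injective (fun j => (b, pos j))}.
  by move=> /allP lt_s p q /lt_s ? /lt_s ? []; rewrite !modn_small.
rewrite cat_uniq; apply/and3P; split.
- rewrite map_inj_in_uniq ?iota_uniq //; apply: pos_inj_in.
  by apply/allP => j; rewrite mem_iota; lia.
- by apply/hasPn => _ /mapP[i _ ->]; apply/mapP => -[j _ []].
- rewrite map_inj_in_uniq; first by rewrite /= !inE; lia.
  by apply: pos_inj_in => /=; lia.
Qed.

Lemma witnesses_closer_to_v0 x : x \in witnesses -> gdist e x v0 < gdist e x u0.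
Proof.
rewrite mem_cat => /orP[/mapP[j j_in ->] | /mapP[i i_in ->]].
  by apply: outer_closer_to_v0; move: j_in; rewrite mem_iota; lia.
move: i_in; rewrite mem_cat => /orP[] /mapP[t t_in ->];
  by apply: (@inner_closer_to_v0 _ t); move: t_in; rewrite mem_iota; lia.
Qed.

Lemma card_lt_double_Wset_v0_u0 : #|{: bool * 'I_n}| < 2 * #|Wset e v0 u0|.
Proof.
have size_w : size witnesses = n.+1 by rewrite size_cat !size_map size_iota /=; lia.
suff : n.+1 <= #|Wset e v0 u0| by rewrite card_GP; lia.
rewrite -size_w -(card_uniqP witnesses_uniq); apply: subset_leq_card.
by apply/subsetP => x /witnesses_closer_to_v0; rewrite inE.
Qed.

Lemma gdist_u0_v0 : gdist e u0 v0 = 1.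
Proof. exact: gdist_edge (GP_spoke 3 (pos 0)) isT. Qed.

End GPn3.

Theorem proposition2p1 : forall n : nat, 16 < n -> ~ dist_balanced (GP_adj n 3) 1.
Proof.
move=> n n_gt16.
apply: (not_dist_balanced_of_large_Wset (gdist_u0_v0 n_gt16)).
exact: card_lt_double_Wset_v0_u0.
Qed.
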